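(* Let $\Pi$ be a stably (resp. haltingly) correct CRN protocol with respect to an interface $\mathcal{I}$, and let $\mathbf{C}^0$ be an infinite family of valid initial configurations that has a stabilization (resp. halting) speed fault. Then there is a constant $\kappa>0$ such that for every integer $n_0>0$ there exist a configuration $\mathbf{c}^0\in\mathbf{C}^0$ of molecular count $\|\mathbf{c}^0\|_1=n\ge n_0$, a weakly fair execution $\eta$ emerging from $\mathbf{c}^0$, and a skipping policy $\sigma$ such that $\operatorname{RT}_{\mathrm{x}}^{\varrho,\sigma}(\eta)\ge\kappa n$ for every runtime policy $\varrho$, where $\mathrm{x}$ stands for $\mathrm{stab}$ (resp. $\mathrm{halt}$).
   Context: Model. CRN protocol $\Pi=(\mathcal{S},\mathcal{R})$: finite species set, finite reaction set $\mathcal{R}\subset\mathbb{N}^{\mathcal{S}}\times\mathbb{N}^{\mathcal{S}}$ of reactions $(\mathbf{r},\mathbf{p})$ with $\|\mathbf{r}\|_1\in\{1,2\}$, $\|\mathbf{r}\|_1\le\|\mathbf{p}\|_1$, each $\mathbf{r}$ with $1\le\|\mathbf{r}\|_1\le2$ having a nonempty set $\mathcal{R}(\mathbf{r})$ of reactions, void reactions ($\mathbf{r}=\mathbf{p}$) being alone in their $\mathcal{R}(\mathbf{r})$, $\operatorname{NV}(\mathcal{R})$ the non-void ones; finite density assumed. Configurations $\mathbf{c}\in\mathbb{N}^{\mathcal{S}}$ ($\|\mathbf{c}\|_1\ge1$); applicability $\mathbf{r}\le\mathbf{c}$, result $\mathbf{c}-\mathbf{r}+\mathbf{p}$; $\operatorname{app}(\mathbf{c})$,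 $\overline{\operatorname{app}}(\mathbf{c})$; reachability $\stackrel{*}{\rightharpoonup}$; configuration digraph $D^{\Pi}$ with $\alpha$-labeled edges $\mathbf{c}\to\alpha(\mathbf{c})$. $\mathrm{stab}(Z)$, $\mathrm{halt}(Z)$: configurations in $Z$ all of whose reachable configurations are in $Z$, resp. equal to themselves. Executions $\langle\mathbf{c}^t,\alpha^t\rangle$, weakly fair if every reaction applicable at step $t$ is scheduled or inapplicable at some later step. Interface $\mathcal{I}=(\mathcal{U},\mu,\mathcal{C})$, $Z_{\mathcal{I}}(\mathbf{c}^0)=\{\mathbf{c}:(\mu(\mathbf{c}^0),\mu(\mathbf{c}))\in\mathcal{C}\}$ with $\mu(\mathbf{c})(u)=\sum_{\mu(A)=u}\mathbf{c}(A)$; valid if nonempty; stably (haltingly) correct: every weakly fair execution from valid $\mathbf{c}^0$ reaches $\mathrm{stab}(Z_{\mathcal{I}}(\mathbf{c}^0))$ ($\mathrm{halt}$); first such step = stabilization (halting) step. Stochastic scheduler with volume $\varphi=\Theta(n)$: propensity $\pi_{\mathbf{c}}(\alpha)=\mathbf{c}(A)/|\mathcal{R}(\mathbf{r})|$ ($\mathbf{r}=A$), $\frac1\varphi\binom{\mathbf{c}(A)}2/|\mathcal{R}(\mathbf{r})|$ ($\mathbf{r}=2A$), $\frac1\varphi\mathbf{c}(A)\mathbf{c}(B)/|\mathcal{R}(\mathbf{r})|$ ($\mathbf{r}=A+B$, $A\ne B$); $\pi_{\mathbf{c}}=\pi_{\mathbf{c}}(\mathcal{R})$; reactions chosen with probability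 proportional to propensity; step time span $1/\pi_{\mathbf{c}^t}$. Runtime: $\tau(\eta,t,Q)=$ least $s>t$ with $\alpha^{s-1}\in Q$ or $Q\subseteq\bigcup_{t\le t'\le s}\overline{\operatorname{app}}(\mathbf{c}^{t'})$; runtime policy $\varrho(\mathbf{c})\subseteq\operatorname{NV}(\mathcal{R})$; skipping policy $\sigma(t)\ge t$; rounds $t(0)=0$, $t_e(i)=\sigma(t(i))$, $\mathbf{e}^i=\mathbf{c}^{t_e(i)}$, $t(i+1)=\tau(\eta,t_e(i),\varrho(\mathbf{e}^i))$; $\operatorname{TC}^{\varrho}(\mathbf{c})$ = expected total time span of steps $0,\dots,\tau(\eta_r,0,\varrho(\mathbf{c}))-1$ of a stochastic execution $\eta_r$ from $\mathbf{c}$; $\operatorname{RT}_{\mathrm{stab}}^{\varrho,\sigma}(\eta)$ (resp. $\mathrm{halt}$) $=\sum_{i<i^*}\operatorname{TC}^{\varrho}(\mathbf{e}^i)$ with $i^*=\min\{i:t(i)\ge t^*\}$, $t^*$ the stabilization (halting) step. Speed faults: for $s>0$, a configuration $\mathbf{c}$ is a stabilization (resp. halting) $s$-pitfall of a valid initial configuration $\mathbf{c}^0$ if $\mathbf{c}^0\stackrel{*}{\rightharpoonup}\mathbf{c}$ and every path in $D^{\Pi}$ from $\mathbf{c}$ to $\mathrm{stab}(Z_{\mathcal{I}}(\mathbf{c}^0))$ (resp. $\mathrm{halt}(Z_{\mathcal{I}}(\mathbf{c}^0))$) includes an edge labeled by a reaction whose propensity (at the edge's source configuration) is at most $s/\varphi$.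 An infinite family $\mathbf{C}^0$ of valid initial configurations has a stabilization (resp. halting) speed fault if for some constant $s>0$ and every integer $n_0>0$ there is $\mathbf{c}^0\in\mathbf{C}^0$ with $\|\mathbf{c}^0\|_1\ge n_0$ that admits a stabilization (resp. halting) $s$-pitfall. *)

From HB Require Import structures.
From mathcomp Require Import all_boot all_order all_algebra.
From mathcomp Require Import all_classical all_reals ereal.
Set Implicit Arguments. Unset Strict Implicit. Unset Printing Implicit Defensive.
Import Order.TTheory GRing.Theory Num.Theory.
Local Open Scope ring_scope.

Lemma pmin_ex (P : nat -> Prop) : (exists n, P n) -> exists n, `[< P n >].
Proof. by case=> n Pn; exists n; apply/asboolP. Qed.

Definition pmin (P : nat -> Prop) (d : nat) : nat :=
  match pselect (exists n, P n) with
  | left h => ex_minn (pmin_ex h)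
  | right _ => d
  end.

Section CRN.
Variable S : finType.

(* vectors in N^S ; configurations are such vectors with norm >= 1 *)
Definition cfg := {ffun S -> nat}.
Definition norm1 (c : cfg) : nat := (\sum_(A : S) c A)%N.
Definition reaction := (cfg * cfg)%type.   (* (reactant vector r, product vector p) *)

Variable Rs : seq reaction.

Definition void (a : reaction) : bool := a.1 == a.2.
Definition NV : seq reaction := [seq a <- Rs | ~~ void a].
Definition Rof (r : cfg) : seq reaction := [seq a <- Rs | a.1 == r].

Definition wf_crn : Prop :=
  [/\ uniq Rs,
      (forall a, a \in Rs -> (norm1 a.1 == 1)%N || (norm1 a.1 == 2)%N),
      (forall a, a \in Rs -> (norm1 a.1 <= norm1 a.2)%N),
      (forall r : cfg, (1 <= norm1 r <= 2)%N -> Rof r != [::]) &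
      (forall a, a \in Rs -> void a -> Rof a.1 = [:: a])].

Definition applicable (a : reaction) (c : cfg) : bool :=
  [forall A, a.1 A <= c A]%N.
Definition apply (a : reaction) (c : cfg) : cfg :=
  [ffun A => (c A - a.1 A + a.2 A)%N].

Definition step (c c' : cfg) : Prop :=
  exists2 a, a \in Rs & applicable a c /\ c' = apply a c.

Inductive reach : cfg -> cfg -> Prop :=
| reach_refl c : reach c c
| reach_step c c' c'' : step c c' -> reach c' c'' -> reach c c''.

Definition stab (Z : cfg -> Prop) (c : cfg) : Prop :=
  Z c /\ forall c', reach c c' -> Z c'.
Definition halt (Z : cfg -> Prop) (c : cfg) : Prop :=
  Z c /\ forall c', reach c c' -> c' = c.

Inductive mode := Stab | Halt.
Definition goal (x : mode) (Z : cfg -> Prop) : cfg -> Prop :=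
  match x with Stab => stab Z | Halt => halt Z end.

Record execution := Exec { ec : nat -> cfg ; ea : nat -> reaction }.

Definition is_execution (eta : execution) (c0 : cfg) : Prop :=
  ec eta 0 = c0 /\
  forall t, [/\ ea eta t \in Rs, applicable (ea eta t) (ec eta t) &
                ec eta t.+1 = apply (ea eta t) (ec eta t)].

Definition weakly_fair (eta : execution) : Prop :=
  forall t a, a \in Rs -> applicable a (ec eta t) ->
    exists t', (t <= t')%N /\
      (ea eta t' = a \/ ~~ applicable a (ec eta t')).

Variables (U : finType) (mu : S -> U)
          (Crel : {ffun U -> nat} -> {ffun U -> nat} -> Prop).

Definition muc (c : cfg) : {ffun U -> nat} :=
  [ffun u => (\sum_(A : S | mu A == u) c A)%N].

Definition ZI (c0 : cfg) : cfg -> Prop :=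
  fun c => (1 <= norm1 c)%N /\ Crel (muc c0) (muc c).

Definition valid (c0 : cfg) : Prop :=
  (1 <= norm1 c0)%N /\ exists c, ZI c0 c.

Definition correct (x : mode) : Prop :=
  forall c0 eta, valid c0 -> is_execution eta c0 -> weakly_fair eta ->
    exists t, goal x (ZI c0) (ec eta t).

Definition finite_density : Prop :=
  exists D : nat, forall c0 c, valid c0 -> reach c0 c ->
    (norm1 c <= D * norm1 c0)%N.

Definition tstar (x : mode) (c0 : cfg) (eta : execution) : nat :=
  pmin (fun t => goal x (ZI c0) (ec eta t)) 0.

Definition tau_pred (eta : execution) (t : nat) (Q : seq reaction) (s : nat) : bool :=
  (t < s)%N &&
  ((ea eta s.-1 \in Q) ||
   all (fun q => has (fun t' => ~~ applicable q (ec eta t')) (index_iota t s.+1)) Q).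

Definition tau (eta : execution) (t : nat) (Q : seq reaction) : nat :=
  pmin (fun s => tau_pred eta t Q s) t.

Definition runtime_policy (rho : cfg -> seq reaction) : Prop :=
  forall c a, a \in rho c -> a \in NV.

Definition skipping_policy (sigma : nat -> nat) : Prop :=
  forall t, (t <= sigma t)%N.

Fixpoint tround (rho : cfg -> seq reaction) (sigma : nat -> nat)
  (eta : execution) (i : nat) : nat :=
  match i with
  | 0 => 0
  | i'.+1 => let te := sigma (tround rho sigma eta i') in
             tau eta te (rho (ec eta te))
  end.

Definition eround rho sigma eta i : cfg := ec eta (sigma (tround rho sigma eta i)).

Definition istar x c0 rho sigma eta : nat :=
  pmin (fun i => tstar x c0 eta <= tround rho sigma eta i)%N 0.

Variable RR : realType.

(* propensity with volume phi: for r = A: c(A)/|R(r)|;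
   for r = 2A: (1/phi) binom(c(A),2)/|R(r)|; for r = A+B: (1/phi) c(A)c(B)/|R(r)|. *)
Definition propensity (phi : RR) (c : cfg) (a : reaction) : RR :=
  phi ^- (norm1 a.1).-1 * (\prod_(A : S) 'C(c A, a.1 A))%:R / (size (Rof a.1))%:R.

Definition ptotal (phi : RR) (c : cfg) : RR := \sum_(a <- Rs) propensity phi c a.

(* W N c Rem = expected total time span of the steps t < min(tau, N) of a
   stochastic execution from c, where Q is the target set of tau and Rem is
   the set of reactions of Q not yet observed inapplicable. *)
Fixpoint Wtrunc (phi : RR) (Q : seq reaction) (N : nat) (c : cfg)
  (Rem : seq reaction) : RR :=
  match N with
  | 0 => 0
  | N'.+1 =>
      (ptotal phi c)^-1 +
      \sum_(a <- Rs)
        (propensity phi c a / ptotal phi c) *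
        (let c' := apply a c in
         let Rem' := [seq q <- Rem | applicable q c'] in
         if (a \in Q) || (Rem' == [::]) then 0
         else Wtrunc phi Q N' c' Rem')
  end.

(* TC^rho(c): expected total time span of steps 0 .. tau(eta_r,0,rho(c))-1
   (as the supremum of the truncated expectations, monotone convergence) *)
Definition TC (phi : RR) (rho : cfg -> seq reaction) (c : cfg) : \bar RR :=
  ereal_sup (range (fun N => (Wtrunc phi (rho c) N c
                                [seq q <- rho c | applicable q c])%:E)).

Definition RT (x : mode) (phi : RR) (rho : cfg -> seq reaction)
  (sigma : nat -> nat) (c0 : cfg) (eta : execution) : \bar RR :=
  (\sum_(i < istar x c0 rho sigma eta) TC phi rho (eround rho sigma eta i))%E.

Fixpoint valid_path (c : cfg) (ps : seq reaction) : Prop :=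
  match ps with
  | [::] => True
  | a :: ps' => [/\ a \in Rs, applicable a c & valid_path (apply a c) ps']
  end.

Fixpoint path_end (c : cfg) (ps : seq reaction) : cfg :=
  match ps with [::] => c | a :: ps' => path_end (apply a c) ps' end.

Fixpoint has_slow_edge (phi s : RR) (c : cfg) (ps : seq reaction) : Prop :=
  match ps with
  | [::] => False
  | a :: ps' => propensity phi c a <= s / phi \/ has_slow_edge phi s (apply a c) ps'
  end.

Definition pitfall (x : mode) (phi s : RR) (c0 c : cfg) : Prop :=
  reach c0 c /\
  forall ps, valid_path c ps -> goal x (ZI c0) (path_end c ps) ->
    has_slow_edge phi s c ps.

(* vol n = the volume phi used when the initial molecular count is n *)
Definition speed_fault (x : mode) (vol : nat -> RR) (C0 : set cfg) : Prop :=
  exists2 s : RR, 0 < s &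
    forall n0 : nat, (0 < n0)%N ->
      exists c0, [/\ C0 c0, (n0 <= norm1 c0)%N &
                     exists c, pitfall x (vol (norm1 c0)) s c0 c].

Definition volume_linear (vol : nat -> RR) : Prop :=
  exists a b : RR, [/\ 0 < a, 0 < b &
    forall n : nat, (1 <= n)%N -> a * n%:R <= vol n /\ vol n <= b * n%:R].
End CRN.

From HB Require Import structures.
From mathcomp Require Import all_boot all_order all_algebra.
From mathcomp Require Import all_classical all_reals ereal.
From mathcomp Require Import zify ring lra.
Set Implicit Arguments. Unset Strict Implicit. Unset Printing Implicit Defensive.
Import Order.TTheory GRing.Theory Num.Theory.
Local Open Scope ring_scope.

(* From a pitfall [c] every path to a stable (halting) configuration uses a
   slow reaction, of propensity at most [s/phi].  Finite density makes the
   graph of fast reactions on configurations reachable from [c] finite, so the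
   fast reactions lead from [c] to a terminal strongly connected component,
   none of whose configurations is stable; a closed walk [W] through it fires
   every fast reaction of every configuration of the component.  The execution
   goes there and traverses [W] [M] times, and the skipping policy starts each
   round at the beginning of a traversal.  Either every round ends within its
   traversal, so that [M] rounds each cost at least [1/ptotal], or some target
   reaction stays applicable along [W] while no fast reaction of the component
   is a target: then the first round only ends after a slow reaction, whose
   total propensity is at most [|Rs| s/phi], so it lasts [phi/(2|Rs|s)] in
   expectation, which is linear in [n] since [phi = Theta(n)]. *)

Lemma pminP (P : nat -> Prop) d : (exists n, P n) ->
  P (pmin P d) /\ forall m, P m -> (pmin P d <= m)%N.
Proof.
move=> ex; rewrite /pmin; case: pselect => [h|//].
case: ex_minnP => m /asboolP Pm min; split => // k Pk; apply: min; exact/asboolP.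
Qed.

Definition null_reaction (S : finType) : reaction S := ([ffun=> 0%N], [ffun=> 0%N]).

Section Paths.
Variables (S : finType) (Rs : seq (reaction S)).
Implicit Types (c : cfg S) (ps : seq (reaction S)) (a : reaction S).

Lemma reach_trans c1 c2 c3 : reach Rs c1 c2 -> reach Rs c2 c3 -> reach Rs c1 c3.
Proof. by elim=> // c c' c'' st _ IH /IH; apply: reach_step. Qed.

Lemma reach1 c a : a \in Rs -> applicable a c -> reach Rs c (apply a c).
Proof. by move=> aR app; apply: reach_step (reach_refl _ _); exists a. Qed.

Lemma reach_path c ps : valid_path Rs c ps -> reach Rs c (path_end c ps).
Proof.
elim: ps c => [|a ps IH] c /=; first by constructor.
by case=> aR app /IH; apply: reach_trans; apply: reach1.
Qed.

Lemma path_of_reach c c' : reach Rs c c' ->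
  exists2 ps, valid_path Rs c ps & path_end c ps = c'.
Proof.
elim=> [c0|c1 c2 c3 [a aR [app ->]] _ [ps v e]]; first by exists [::].
by exists (a :: ps).
Qed.

Lemma valid_path_cat c ps1 ps2 : valid_path Rs c (ps1 ++ ps2) <->
  valid_path Rs c ps1 /\ valid_path Rs (path_end c ps1) ps2.
Proof.
elim: ps1 c => [|a ps IH] c /=; first by split=> [h|[]].
by split=> [[aR app /IH []]|[[aR app v1] v2]] //; split=> //; apply/IH.
Qed.

Lemma path_end_cat c ps1 ps2 :
  path_end c (ps1 ++ ps2) = path_end (path_end c ps1) ps2.
Proof. by elim: ps1 c => //=. Qed.

Lemma valid_path_nseq c W k : valid_path Rs c W -> path_end c W = c ->
  valid_path Rs c (flatten (nseq k W)) /\ path_end c (flatten (nseq k W)) = c.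
Proof.
move=> v e; elim: k => [|k [v' e']] //=.
by rewrite valid_path_cat path_end_cat e.
Qed.

Definition cfg_at c ps j := path_end c (take j ps).

Lemma cfg_at0 c ps : cfg_at c ps 0 = c.
Proof. by rewrite /cfg_at take0. Qed.

Lemma cfg_at_size c ps j : (size ps <= j)%N -> cfg_at c ps j = path_end c ps.
Proof. by move=> h; rewrite /cfg_at take_oversize. Qed.

Lemma cfg_atS d c ps j : valid_path Rs c ps -> (j < size ps)%N ->
  [/\ nth d ps j \in Rs, applicable (nth d ps j) (cfg_at c ps j) &
      cfg_at c ps j.+1 = apply (nth d ps j) (cfg_at c ps j)].
Proof.
move=> + lt; rewrite -{1}(cat_take_drop j ps) valid_path_cat (drop_nth d lt).
rewrite /cfg_at (take_nth d lt) -cats1 path_end_cat.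
by case=> _ [].
Qed.

Lemma reach_cfg_at c ps j : valid_path Rs c ps -> reach Rs c (cfg_at c ps j).
Proof.
by rewrite -{1}(cat_take_drop j ps) valid_path_cat => -[/reach_path].
Qed.

Lemma cfg_at_catl c ps1 ps2 j : (j <= size ps1)%N ->
  cfg_at c (ps1 ++ ps2) j = cfg_at c ps1 j.
Proof.
rewrite leq_eqVlt => /orP [/eqP ->|lt]; last by rewrite /cfg_at take_cat lt.
by rewrite /cfg_at take_cat ltnn subnn take0 cats0 take_size.
Qed.

Lemma cfg_at_catr c ps1 ps2 j : (size ps1 <= j)%N ->
  cfg_at c (ps1 ++ ps2) j = cfg_at (path_end c ps1) ps2 (j - size ps1).
Proof. by move=> h; rewrite /cfg_at take_cat ltnNge h /= path_end_cat. Qed.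

Hypothesis Hgrow : forall a, a \in Rs -> (norm1 a.1 <= norm1 a.2)%N.

Lemma norm1_apply a c : applicable a c ->
  (norm1 (apply a c) + norm1 a.1 = norm1 c + norm1 a.2)%N.
Proof.
move=> /forallP app; rewrite /norm1 -!big_split /=; apply: eq_bigr => A _.
by rewrite ffunE; have := app A; lia.
Qed.

Lemma reach_norm1 c c' : reach Rs c c' -> (norm1 c <= norm1 c')%N.
Proof.
elim=> // c1 c2 c3 [a aR [app ->]] _; apply: leq_trans.
by have := norm1_apply app; have := Hgrow aR; lia.
Qed.

End Paths.

Section FairExtension.
Variables (S : finType) (Rs : seq (reaction S)).
Implicit Types (c : cfg S) (ps : seq (reaction S)) (a : reaction S).
Hypothesis Hgrow : forall a, a \in Rs -> (norm1 a.1 <= norm1 a.2)%N.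
Hypothesis Happ : forall c, (1 <= norm1 c)%N -> has (fun a => applicable a c) Rs.

Let d0 := null_reaction S.

(* Scheduling the reaction of index [t mod |Rs|] at time [t] whenever it is
   applicable makes every extension weakly fair. *)
Definition round_robin t c :=
  let a := nth d0 Rs (t %% size Rs) in
  if applicable a c then a else nth d0 Rs (find (fun a => applicable a c) Rs).

Fixpoint round_robin_cfg c t :=
  if t is t'.+1 then
    let c' := round_robin_cfg c t' in apply (round_robin t' c') c'
  else c.

Lemma round_robinP t c : (1 <= norm1 c)%N ->
  round_robin t c \in Rs /\ applicable (round_robin t c) c.
Proof.
move=> /Happ hasR; rewrite /round_robin; case: ifP => [app|_].
  by rewrite mem_nth // ltn_mod; case: (Rs) hasR.
by split; [rewrite mem_nth // -has_find | exact: (nth_find d0 hasR)].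
Qed.

Lemma round_robin_cfg_norm1 c t : (1 <= norm1 c)%N ->
  (1 <= norm1 (round_robin_cfg c t))%N.
Proof.
move=> c1; elim: t => //= t IH; have [aR app] := round_robinP t IH.
exact: leq_trans IH (reach_norm1 Hgrow (reach1 aR app)).
Qed.

Definition extend_path c0 ps : execution S :=
  let c := path_end c0 ps in
  Exec (fun t => if (t < size ps)%N then cfg_at c0 ps t
                 else round_robin_cfg c (t - size ps))
       (fun t => if (t < size ps)%N then nth d0 ps t
                 else round_robin (t - size ps) (round_robin_cfg c (t - size ps))).

Lemma extend_path_cfg c0 ps t : (t <= size ps)%N ->
  ec (extend_path c0 ps) t = cfg_at c0 ps t.
Proof.
rewrite /= leq_eqVlt => /orP [/eqP ->|->] //.
by rewrite ltnn subnn cfg_at_size.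
Qed.

Lemma extend_path_tail c0 ps t : (size ps <= t)%N ->
  ec (extend_path c0 ps) t = round_robin_cfg (path_end c0 ps) (t - size ps) /\
  ea (extend_path c0 ps) t =
    round_robin (t - size ps) (round_robin_cfg (path_end c0 ps) (t - size ps)).
Proof. by rewrite /= ltnNge => ->. Qed.

Lemma extend_path_exec c0 ps : (1 <= norm1 c0)%N -> valid_path Rs c0 ps ->
  is_execution Rs (extend_path c0 ps) c0.
Proof.
move=> c01 v; split; first by rewrite extend_path_cfg // cfg_at0.
move=> t; case: (ltnP t (size ps)) => lt.
  rewrite !extend_path_cfg ?(ltnW lt) //= lt; exact: cfg_atS.
have c1 := leq_trans c01 (reach_norm1 Hgrow (reach_path v)).
have [-> ->] := extend_path_tail c0 lt.
have [-> _] := extend_path_tail c0 (leqW lt).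
rewrite subSn //=.
by have [] := round_robinP (t - size ps) (round_robin_cfg_norm1 (t - size ps) c1).
Qed.

Lemma extend_path_fair c0 ps : weakly_fair Rs (extend_path c0 ps).
Proof.
move=> t a aR _; have Rs0 : (0 < size Rs)%N by case: (Rs) aR.
pose t' := (size ps + (t.+1 * size Rs + index a Rs))%N.
have le_tt' : (t <= t')%N.
  have : (t.+1 <= t.+1 * size Rs)%N by rewrite leq_pmulr.
  rewrite /t'; lia.
exists t'; split=> //; have [-> ->] := extend_path_tail c0 (leq_addr _ _ : size ps <= t')%N.
rewrite addKn /round_robin modnMDl modn_small ?index_mem // nth_index //.
by case: ifP; [left | right].
Qed.

Lemma fair_extension c0 ps : (1 <= norm1 c0)%N -> valid_path Rs c0 ps ->
  exists eta, [/\ is_execution Rs eta c0, weakly_fair Rs eta,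
    forall t, (t <= size ps)%N -> ec eta t = cfg_at c0 ps t &
    forall t, (t < size ps)%N -> ea eta t = nth (null_reaction S) ps t].
Proof.
move=> c01 v; exists (extend_path c0 ps); split.
- exact: extend_path_exec.
- exact: extend_path_fair.
- exact: extend_path_cfg.
- by move=> t /= ->.
Qed.

End FairExtension.

Section Propensity.
Variables (S : finType) (Rs : seq (reaction S)) (RR : realType) (phi : RR).
Implicit Types (c : cfg S) (a : reaction S).

Lemma propensity_gt0_applicable c a : 0 < propensity Rs phi c a -> applicable a c.
Proof.
move=> h; apply/forallP => A; rewrite leqNgt; apply/negP => lt; move: h.
by rewrite /propensity (bigD1 A) //= bin_small // mul0n mulr0 mul0r ltxx.
Qed.

Lemma propensity_unimolecular c a : a \in Rs -> applicable a c ->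
  norm1 a.1 = 1%N -> (size Rs)%:R^-1 <= propensity Rs phi c a.
Proof.
move=> aR /forallP app a1; rewrite /propensity a1 expr0 invr1 mul1r.
have Rof_gt0 : (0 < size (Rof Rs a.1))%N.
  by rewrite -has_predT; apply/hasP; exists a; rewrite // mem_filter eqxx.
have Rof_le : (size (Rof Rs a.1) <= size Rs)%N by rewrite size_filter count_size.
have prod_ge1 : (1 <= \prod_(A : S) 'C(c A, a.1 A))%N.
  by apply: prodn_gt0 => A; rewrite bin_gt0.
apply: (@le_trans _ _ (size (Rof Rs a.1))%:R^-1).
  by rewrite lef_pV2 ?posrE ?ltr0n ?ler_nat // (leq_trans Rof_gt0).
by rewrite ler_peMl ?invr_ge0 // ler1n.
Qed.

Lemma TC_ge0 rho c : (0 <= TC Rs phi rho c)%E.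
Proof. by apply: le_trans (ereal_sup_ubound _); last exists 0%N. Qed.

Lemma TC_ge_inv_ptotal rho c : ((ptotal Rs phi c)^-1%:E <= TC Rs phi rho c)%E.
Proof.
apply: le_trans (ereal_sup_ubound _); last by exists 1%N.
by rewrite lee_fin /= big1 ?addr0 // => a _; case: ifP; rewrite mulr0.
Qed.

Hypothesis Hphi : 0 <= phi.

Lemma propensity_ge0 c a : 0 <= propensity Rs phi c a.
Proof. by rewrite /propensity !mulr_ge0 ?invr_ge0 ?exprn_ge0. Qed.

Lemma ptotal_ge0 c : 0 <= ptotal Rs phi c.
Proof. by apply: sumr_ge0 => a _; apply: propensity_ge0. Qed.

Lemma propensity_le_ptotal c a : a \in Rs -> propensity Rs phi c a <= ptotal Rs phi c.
Proof.
move=> aR; rewrite /ptotal (big_rem a aR) /= lerDl.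
by apply: sumr_ge0 => b _; apply: propensity_ge0.
Qed.

Lemma Wtrunc_ge0 Q N c Rem : 0 <= Wtrunc Rs phi Q N c Rem.
Proof.
elim: N c Rem => [|N IH] c Rem //=.
rewrite addr_ge0 ?invr_ge0 ?ptotal_ge0 //; apply: sumr_ge0 => a _.
by rewrite !mulr_ge0 ?invr_ge0 ?exprn_ge0 ?ptotal_ge0 //; case: ifP.
Qed.

End Propensity.

Lemma unimolecular_applicable (S : finType) (Rs : seq (reaction S)) (c : cfg S) :
  (forall r : cfg S, (1 <= norm1 r <= 2)%N -> Rof Rs r != [::]) ->
  (1 <= norm1 c)%N -> exists2 a, a \in Rs & applicable a c /\ norm1 a.1 = 1%N.
Proof.
move=> Rof_ne c1.
have [A cA] : exists A, (0 < c A)%N.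
  apply/existsP; apply: contraTT c1; rewrite negb_exists => /forallP c0.
  by rewrite -leqNgt /norm1 big1 // => A _; apply/eqP; rewrite -leqn0 leqNgt c0.
pose r : cfg S := [ffun B => nat_of_bool (B == A)].
have r1 : norm1 r = 1%N.
  rewrite /norm1 (bigD1 A) //= big1 => [|B nBA]; first by rewrite ffunE eqxx.
  by rewrite ffunE (negbTE nBA).
have /hasP [a] : has predT (Rof Rs r) by rewrite has_predT lt0n size_eq0 Rof_ne ?r1.
rewrite mem_filter => /andP [/eqP ar aR] _; exists a => //; rewrite ar r1.
by split=> //; apply/forallP => B; rewrite ar ffunE; case: eqP => [->|].
Qed.

Section Executions.
Variables (S U : finType) (Rs : seq (reaction S)) (mu : S -> U).
Variables (Crel : {ffun U -> nat} -> {ffun U -> nat} -> Prop) (x : mode).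
Implicit Types (c : cfg S) (eta : execution S) (Q : seq (reaction S)).

Lemma goal_reach Z c c' : goal Rs x Z c -> reach Rs c c' -> goal Rs x Z c'.
Proof.
case: x => /= -[Zc H] r; last by rewrite (H _ r).
by split=> [|c'' /(reach_trans r)]; apply: H.
Qed.

Lemma exec_reach eta c0 t t' : is_execution Rs eta c0 -> (t <= t')%N ->
  reach Rs (ec eta t) (ec eta t').
Proof.
move=> [_ H] /subnKC <-; elim: (t' - t)%N => [|k IH].
  by rewrite addn0; apply: reach_refl.
apply: reach_trans IH _; rewrite addnS; case: (H (t + k)) => aR app ->.
exact: reach1.
Qed.

Lemma tstar_spec c0 eta : correct Rs mu Crel x -> valid mu Crel c0 ->
  is_execution Rs eta c0 -> weakly_fair Rs eta ->
  let ts := tstar Rs mu Crel x c0 eta in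
  goal Rs x (ZI mu Crel c0) (ec eta ts) /\
  forall t, ~ goal Rs x (ZI mu Crel c0) (ec eta t) -> (t < ts)%N.
Proof.
move=> corr val E fair; have [goal_ts _] := pminP 0 (corr _ _ val E fair).
split=> // t ngoal; rewrite ltnNge; apply/negP => le; apply: ngoal.
exact: goal_reach goal_ts (exec_reach E le).
Qed.

Lemma tau_exists eta t Q : weakly_fair Rs eta -> {subset Q <= Rs} ->
  exists s, tau_pred eta t Q s.
Proof.
move=> fair sQ.
suff [[s [lts inQ]]|[s [les H]]] : (exists s, (t < s)%N /\ ea eta s.-1 \in Q) \/
   (exists s, (t <= s)%N /\ forall q, q \in Q -> exists t',
       (t <= t' <= s)%N /\ ~~ applicable q (ec eta t')).
- by exists s; rewrite /tau_pred lts inQ.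
- exists s.+1; rewrite /tau_pred ltnS les /=; apply/orP; right.
  apply/allP => q /H [t' [h1 h2]]; apply/hasP; exists t' => //.
  by rewrite mem_index_iota; lia.
elim: Q sQ => [|q Q IH] sQ; first by right; exists t.
have sQ' : {subset Q <= Rs} by move=> a aQ; apply: sQ; rewrite inE aQ orbT.
case: (IH sQ') => [[s [h1 h2]]|[s [les H]]].
  by left; exists s; rewrite inE h2 orbT.
have [t' [le1 h]] : exists t', (t <= t')%N /\
    (ea eta t' = q \/ ~~ applicable q (ec eta t')).
  case: (boolP (applicable q (ec eta t))) => app; last by exists t; split; last right.
  by apply: fair app; apply: sQ; rewrite inE eqxx.
case: h => [eaq|nq]; first by left; exists t'.+1; rewrite /= eaq inE eqxx; split.
right; exists (maxn s t'); split; first by rewrite leq_max les.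
move=> y; rewrite inE => /orP [/eqP ->|/H [t2 [/andP [h3 h4] h5]]].
  by exists t'; rewrite le1 leq_maxr.
by exists t2; rewrite h3 leq_max h4.
Qed.

Lemma tauP eta t Q : weakly_fair Rs eta -> {subset Q <= Rs} ->
  [/\ (t < tau eta t Q)%N, tau_pred eta t Q (tau eta t Q) &
      forall s, tau_pred eta t Q s -> (tau eta t Q <= s)%N].
Proof.
move=> fair sQ; have [h1 h2] := pminP t (tau_exists t fair sQ).
by move: (h1) => /andP [].
Qed.

Variables (eta : execution S) (sigma : nat -> nat) (rho : cfg S -> seq (reaction S)).
Hypothesis Hfair : weakly_fair Rs eta.
Hypothesis Hsigma : skipping_policy sigma.
Hypothesis Hrho : runtime_policy Rs rho.

Lemma runtime_policy_sub c : {subset rho c <= Rs}.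
Proof. by move=> a /Hrho; rewrite mem_filter => /andP []. Qed.

Local Notation tr := (tround rho sigma eta).

Lemma tround_ltS i : (tr i < tr i.+1)%N.
Proof.
have [lt _ _] := tauP (sigma (tr i)) Hfair (@runtime_policy_sub (ec eta (sigma (tr i)))).
exact: leq_ltn_trans (Hsigma _) lt.
Qed.

Lemma tround_ge i : (i <= tr i)%N.
Proof. by elim: i => // i IH; apply: leq_ltn_trans IH (tround_ltS i). Qed.

Lemma istar_spec c0 : let ist := istar Rs mu Crel x c0 rho sigma eta in
  (tstar Rs mu Crel x c0 eta <= tr ist)%N /\
  forall i, (tstar Rs mu Crel x c0 eta <= tr i)%N -> (ist <= i)%N.
Proof. by apply: pminP; exists (tstar Rs mu Crel x c0 eta); apply: tround_ge. Qed.

Lemma RT_ge_sum (RR : realType) (phi : RR) c0 k :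
  (k <= istar Rs mu Crel x c0 rho sigma eta)%N ->
  ((\sum_(i < k) TC Rs phi rho (eround rho sigma eta i))%E <=
     RT Rs mu Crel x phi rho sigma c0 eta)%E.
Proof.
move=> le; pose F i := TC Rs phi rho (eround rho sigma eta i).
by apply: (@lee_sum_nneg_ord _ F xpredT) => // i _; apply: TC_ge0.
Qed.

End Executions.

Lemma sum_threshold_ge (R : realDomainType) (I : eqType) (r : seq I) (p X : I -> R)
  (m th : R) : 0 <= m -> 0 <= th ->
  (forall i, 0 <= p i) -> (forall i, 0 <= X i) ->
  (forall i, i \in r -> th < p i -> m <= X i) ->
  (\sum_(i <- r) p i) * m - (size r)%:R * th * m <= \sum_(i <- r) p i * X i.
Proof.
move=> m0 th0 p0 X0 HX.
have -> : (size r)%:R * th * m = \sum_(i <- r) th * m.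
  by rewrite big_const_seq count_predT iter_addr_0 -mulrA mulr_natl.
rewrite mulr_suml -sumrB.
rewrite !big_seq; apply: ler_sum => i ir; case: (ltrP th (p i)) => hp.
  by rewrite lerBlDr (le_trans (ler_wpM2l (p0 i) (HX i ir hp))) ?lerDl ?mulr_ge0.
by rewrite (le_trans _ (mulr_ge0 (p0 i) (X0 i))) // subr_le0 ler_wpM2r.
Qed.

(* The step itself takes time [1/P >= 1/Pi] and loses at most the fraction
   [eps/P] of the time [m] still guaranteed afterwards; as long as
   [eps * m <= 1/2] this gains at least [1/(2 Pi)]. *)
Lemma trap_time_step (R : realFieldType) (n : nat) (Pi eps P Sx : R) :
  0 < P -> P <= Pi -> 0 < eps ->
  let m := Num.min (n%:R / (2 * Pi)) (2 * eps)^-1 in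
  P * m - eps * m <= Sx -> Num.min (n.+1%:R / (2 * Pi)) (2 * eps)^-1 <= P^-1 + Sx * P^-1.
Proof.
move=> P0 PPi eps0 m Sx_ge; have Pi0 := lt_le_trans P0 PPi.
have u0 : 0 < P^-1 by rewrite invr_gt0.
have h2Pi : 0 < 2 * Pi by rewrite mulr_gt0.
have epsm : eps * m <= 2^-1.
  have : m <= (2 * eps)^-1 by rewrite ge_min lexx orbT.
  move/(ler_wpM2l (ltW eps0)); rewrite invfM mulrCA mulfV ?mulr1 //.
  exact: lt0r_neq0.
have Sxu_ge : m - P^-1 / 2 <= Sx * P^-1.
  have := ler_wpM2r (ltW u0) Sx_ge; rewrite mulrBl mulrAC mulfV ?mul1r; last first.
    exact: lt0r_neq0.
  by have := ler_wpM2r (ltW u0) epsm; lra.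
have step_ge : m + (2 * Pi)^-1 <= P^-1 + Sx * P^-1.
  have half_ge0 : 0 <= 2^-1 :> R by rewrite invr_ge0 ler0n.
  have uPi : Pi^-1 <= P^-1 by rewrite lef_pV2 ?posrE.
  by rewrite invfM; have := ler_wpM2l half_ge0 uPi; lra.
apply: le_trans step_ge; rewrite -natr1 mulrDl mul1r /m.
case: (leP (n%:R / (2 * Pi)) (2 * eps)^-1) => _; first by rewrite ge_min lexx.
by rewrite ge_min lerDl invr_ge0 (ltW h2Pi) orbT.
Qed.

Section TrapBound.
Variables (S : finType) (Rs : seq (reaction S)) (RR : realType) (phi s Pi : RR).
Variables (Q : seq (reaction S)) (q : reaction S) (B : cfg S -> Prop).
Implicit Types (c : cfg S) (a : reaction S).
Hypothesis Hphi : 0 < phi.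
Hypothesis Hs : 0 < s.
Hypothesis HRs : (0 < size Rs)%N.
Hypothesis HBpos : forall c, B c -> 0 < ptotal Rs phi c.
Hypothesis HBPi : forall c, B c -> ptotal Rs phi c <= Pi.
Hypothesis Hstay : forall c a, B c -> a \in Rs -> s / phi < propensity Rs phi c a ->
  B (apply a c) /\ a \notin Q.
Hypothesis Hq : forall c, B c -> applicable q c.

(* [eps] bounds the total propensity of the slow reactions, the only ones
   that can leave [B] or fire a reaction of [Q]. *)
Let eps := (size Rs)%:R * (s / phi).

Let eps_gt0 : 0 < eps.
Proof. by rewrite mulr_gt0 ?ltr0n ?divr_gt0. Qed.

Lemma Wtrunc_trap_ge N c Rem : B c -> q \in Rem ->
  Num.min (N%:R / (2 * Pi)) (2 * eps)^-1 <= Wtrunc Rs phi Q N c Rem.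
Proof.
elim: N c Rem => [|N IH] c Rem Bc qRem; first by rewrite mul0r ge_min lexx.
cbn [Wtrunc]; under eq_bigr => a _ do rewrite mulrAC.
rewrite -mulr_suml; apply: trap_time_step (HBpos Bc) (HBPi Bc) eps_gt0 _.
have Pi0 : 0 < Pi := lt_le_trans (HBpos Bc) (HBPi Bc).
apply: sum_threshold_ge => [|||a|a aR hp].
- have h2eps : 0 < 2 * eps by rewrite mulr_gt0.
  by rewrite le_min divr_ge0 ?ler0n ?invr_ge0 ?(ltW h2eps) // mulr_ge0 // ltW.
- by rewrite divr_ge0 ?ltW.
- exact: propensity_ge0 (ltW Hphi) _.
- by case: ifP => _ //; apply: Wtrunc_ge0 (ltW Hphi) _ _ _ _.
have [Bc' naQ] := Hstay Bc aR hp.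
have qRem' : q \in [seq q0 <- Rem | applicable q0 (apply a c)].
  by rewrite mem_filter Hq // qRem.
rewrite (negbTE naQ) /=; case: eqP => [E|_]; first by rewrite E in qRem'.
exact: IH.
Qed.

Lemma TC_trap_ge rho c : B c -> rho c = Q -> q \in Q ->
  ((phi / (2 * (size Rs)%:R * s))%:E <= TC Rs phi rho c)%E.
Proof.
move=> Bc EQ qQ; have Pi0 : 0 < Pi := lt_le_trans (HBpos Bc) (HBPi Bc).
have -> : phi / (2 * (size Rs)%:R * s) = (2 * eps)^-1.
  by rewrite /eps; field; rewrite !lt0r_neq0 ?ltr0n.
pose N := Num.Def.archi_bound (Pi / eps).
have hN : Pi / eps < N%:R by rewrite archi_boundP // divr_ge0 ?ltW.
apply: le_trans (ereal_sup_ubound _); last by exists N.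
rewrite lee_fin EQ; apply: le_trans (Wtrunc_trap_ge N Bc _); last first.
  by rewrite mem_filter Hq.
rewrite le_min lexx andbT ler_pdivlMr ?mulr_gt0 //.
have -> : (2 * eps)^-1 * (2 * Pi) = Pi / eps by field; apply: lt0r_neq0.
exact: ltW.
Qed.

End TrapBound.

Lemma connect_terminal_scc (T : finType) (e : rel T) x :
  exists2 f, connect e x f & forall g, connect e f g -> connect e g f.
Proof.
have [f xf minf] := @arg_minnP _ x (connect e x) (fun g => #|connect e g|) (connect0 _ _).
exists f => // g fg.
have sub : connect e g \subset connect e f.
  by apply/fintype.subsetP => y; apply: connect_trans.
have /subset_cardP /(_ sub) /(_ f) : #|connect e g| = #|connect e f|.
  by apply/eqP; rewrite eqn_leq minf ?subset_leq_card // (connect_trans xf).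
by rewrite !inE connect0.
Qed.

Section FastWalk.
Variables (S : finType) (Rs : seq (reaction S)) (RR : realType) (phi s : RR).
Implicit Types (c : cfg S) (ps : seq (reaction S)) (a : reaction S).

Definition fast c a := applicable a c && (s / phi < propensity Rs phi c a).

Definition fast_complete c W := forall j a, (j < size W)%N -> a \in Rs ->
  fast (cfg_at c W j) a -> exists2 j', (j' < size W)%N &
    cfg_at c W j' = cfg_at c W j /\ nth (null_reaction S) W j' = a.

Lemma stays_cat (P : cfg S -> Prop) c ps1 ps2 :
  (forall j, (j < size ps1)%N -> P (cfg_at c ps1 j)) ->
  (forall j, (j < size ps2)%N -> P (cfg_at (path_end c ps1) ps2 j)) ->
  forall j, (j < size (ps1 ++ ps2))%N -> P (cfg_at c (ps1 ++ ps2) j).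
Proof.
move=> h1 h2 j; rewrite size_cat => lt; case: (ltnP j (size ps1)) => l.
  by rewrite cfg_at_catl ?(ltnW l) //; apply: h1.
by rewrite cfg_at_catr //; apply: h2; rewrite ltn_subLR.
Qed.

Variables (c : cfg S) (K : nat).
Hypothesis Hbound : forall c', reach Rs c c' -> (norm1 c' <= K)%N.

(* Configurations reachable from [c] have size at most [K], so they embed in
   the finite type [{ffun S -> 'I_K.+1}], on which the fast reactions form a
   finite digraph. *)
Local Notation Tc := {ffun S -> 'I_K.+1}.

Definition emb (g : Tc) : cfg S := [ffun A => nat_of_ord (g A)].
Definition proj c' : Tc := [ffun A => inord (c' A)].

Lemma emb_proj c' : (norm1 c' <= K)%N -> emb (proj c') = c'.
Proof.
move=> h; apply/ffunP => A; rewrite !ffunE inordK // ltnS (leq_trans _ h) //.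
by rewrite /norm1 (bigD1 A) //= leq_addr.
Qed.

Definition fast_edge : rel Tc := fun g h =>
  has (fun a => fast (emb g) a && (apply a (emb g) == emb h)) Rs.

Lemma fast_connect_path g h : connect fast_edge g h -> exists ps,
  [/\ valid_path Rs (emb g) ps, path_end (emb g) ps = emb h,
      ~ has_slow_edge Rs phi s (emb g) ps &
      forall j, (j < size ps)%N ->
        exists2 z, connect fast_edge g z & cfg_at (emb g) ps j = emb z].
Proof.
move/connectP => [p + ->]; elim: p g => [|z p IH] g /=; first by exists [::]; split.
case/andP => /hasP [a aR /andP [/andP [app fa] /eqP e]] /IH [ps [v pe ns vis]].
exists (a :: ps); rewrite /= e; split=> // [[slow|//]|[_|j]].
- by move: fa; rewrite ltNge slow.
- by exists g; rewrite ?cfg_at0.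
rewrite ltnS => /vis [y zy yv]; exists y; last by rewrite /cfg_at /= e.
apply: connect_trans zy; apply: connect1; apply/hasP; exists a => //.
by rewrite /fast app fa e eqxx.
Qed.

Lemma fast_edge_closed g a : connect fast_edge (proj c) g -> a \in Rs ->
  fast (emb g) a -> exists2 h, fast_edge g h & apply a (emb g) = emb h.
Proof.
move=> cg aR fa; have /andP [app _] := fa.
have rg : reach Rs c (apply a (emb g)).
  have [ps [v pe _ _]] := fast_connect_path cg.
  have := reach_path v; rewrite pe emb_proj ?Hbound //; last exact: reach_refl.
  by move/reach_trans; apply; apply: reach1.
have e : emb (proj (apply a (emb g))) = apply a (emb g) := emb_proj (Hbound rg).
by exists (proj (apply a (emb g))) => //; apply/hasP; exists a; rewrite // fa e eqxx.
Qed.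

Section TerminalComponent.
Variable f : Tc.
Hypothesis Hcf : connect fast_edge (proj c) f.
Hypothesis Hscc : forall g, connect fast_edge f g -> connect fast_edge g f.

Definition in_scc c' := exists2 z, connect fast_edge f z & c' = emb z.

Definition scc_walk W := [/\ valid_path Rs (emb f) W, path_end (emb f) W = emb f &
  forall j, (j < size W)%N -> in_scc (cfg_at (emb f) W j)].

Lemma scc_walk_cat W1 W2 : scc_walk W1 -> scc_walk W2 -> scc_walk (W1 ++ W2).
Proof.
move=> [v1 e1 s1] [v2 e2 s2]; split.
- by rewrite valid_path_cat e1.
- by rewrite path_end_cat e1.
- by apply: stays_cat; rewrite // e1.
Qed.

Lemma scc_walk_through g a : connect fast_edge f g -> a \in Rs -> fast (emb g) a ->
  exists2 W, scc_walk W & exists2 j, (j < size W)%N &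
    cfg_at (emb f) W j = emb g /\ nth (null_reaction S) W j = a.
Proof.
move=> fg aR fa; have /andP [app _] := fa.
have [h gh eh] := fast_edge_closed (connect_trans Hcf fg) aR fa.
have fh : connect fast_edge f h := connect_trans fg (connect1 gh).
have [ps1 [v1 e1 _ s1]] := fast_connect_path fg.
have [ps2 [v2 e2 _ s2]] := fast_connect_path (Hscc fh).
exists (ps1 ++ [:: a] ++ ps2); last first.
  exists (size ps1); first by rewrite size_cat /= addnS ltnS leq_addr.
  by rewrite cfg_at_catr // subnn cfg_at0 nth_cat ltnn subnn.
split.
- by rewrite valid_path_cat e1 /= eh.
- by rewrite path_end_cat e1 /= eh.
apply: stays_cat => [j /s1 [z fz ->]|]; first by exists z.
rewrite e1; apply: stays_cat => [[_|//]|j]; first by rewrite cfg_at0; exists g.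
by rewrite /= eh => /s2 [z hz ->]; exists z => //; apply: connect_trans hz.
Qed.

Lemma scc_walk_covering (pairs : seq (Tc * reaction S)) :
  (forall p, p \in pairs ->
     [/\ connect fast_edge f p.1, p.2 \in Rs & fast (emb p.1) p.2]) ->
  exists2 W, scc_walk W & forall p, p \in pairs -> exists2 j, (j < size W)%N &
    cfg_at (emb f) W j = emb p.1 /\ nth (null_reaction S) W j = p.2.
Proof.
elim: pairs => [|p pairs IH] H; first by exists [::] => //; split.
have [W1 w1 [j1 lt1 at1]] : exists2 W, scc_walk W & exists2 j, (j < size W)%N &
    cfg_at (emb f) W j = emb p.1 /\ nth (null_reaction S) W j = p.2.
  by have [] := H p (mem_head _ _); apply: scc_walk_through.
have [|W2 w2 cov2] := IH; first by move=> p' p'P; apply: H; rewrite inE p'P orbT.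
exists (W1 ++ W2); first exact: scc_walk_cat.
have [_ e1 _] := w1.
move=> p'; rewrite inE => /orP [/eqP ->|/cov2 [j lt [at2 nth2]]].
  exists j1; first by rewrite size_cat ltn_addr.
  by rewrite cfg_at_catl ?(ltnW lt1) // nth_cat lt1.
exists (size W1 + j); first by rewrite size_cat ltn_add2l.
by rewrite cfg_at_catr ?leq_addr // addKn e1 nth_cat ltnNge leq_addr /= addKn.
Qed.

Lemma scc_walk_fast_complete a0 : a0 \in Rs -> fast (emb f) a0 ->
  exists W, [/\ scc_walk W, (0 < size W)%N & fast_complete (emb f) W].
Proof.
move=> a0R fa0.
pose pairs := [seq p <- [seq (g, a) | g <- enum Tc, a <- Rs] |
   connect fast_edge f p.1 && (p.2 \in Rs) && fast (emb p.1) p.2].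
have pairsP g a : connect fast_edge f g -> a \in Rs -> fast (emb g) a -> (g, a) \in pairs.
  by move=> fg aR fa; rewrite mem_filter /= fg aR fa; apply: allpairs_f; rewrite ?mem_enum.
have [|W w cov] := @scc_walk_covering pairs.
  by move=> p; rewrite mem_filter => /andP [/andP [/andP [-> ->] ->] _].
exists W; split=> //.
  by have [j lt _] := cov _ (pairsP _ _ (connect0 _ _) a0R fa0); apply: leq_ltn_trans lt.
move=> j a lt aR fa; have [_ _ /(_ j lt) [g fg eg]] := w; rewrite eg in fa *.
by have [j' lt' [at' nth']] := cov _ (pairsP _ _ fg aR fa); exists j'.
Qed.

End TerminalComponent.

Hypothesis Hfast : forall c', reach Rs c c' -> exists2 a, a \in Rs & fast c' a.

Lemma fast_trap_walk : exists f ps W,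
  [/\ valid_path Rs c ps /\ path_end c ps = f, ~ has_slow_edge Rs phi s c ps,
      valid_path Rs f W /\ path_end f W = f, (0 < size W)%N & fast_complete f W].
Proof.
have [f cf scc] := connect_terminal_scc fast_edge (proj c).
have [ps [+ + + _]] := fast_connect_path cf.
rewrite emb_proj ?Hbound //; last exact: reach_refl.
move=> v pe ns; have [a aR fa] : exists2 a, a \in Rs & fast (emb f) a.
  by apply: Hfast; rewrite -pe; apply: reach_path.
have [W [[vW eW _] W0 fc]] := scc_walk_fast_complete cf scc aR fa.
by exists (emb f), ps, W.
Qed.

End FastWalk.

Lemma loop_execution (S : finType) (Rs : seq (reaction S)) (c0 f : cfg S)
  (P0 W : seq (reaction S)) (M : nat) :
  (forall a, a \in Rs -> (norm1 a.1 <= norm1 a.2)%N) ->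
  (forall c, (1 <= norm1 c)%N -> has (fun a => applicable a c) Rs) ->
  (1 <= norm1 c0)%N -> valid_path Rs c0 P0 -> path_end c0 P0 = f ->
  valid_path Rs f W -> path_end f W = f ->
  exists eta, [/\ is_execution Rs eta c0, weakly_fair Rs eta,
    forall i j, (i < M)%N -> (j <= size W)%N ->
      ec eta (size P0 + i * size W + j) = cfg_at f W j &
    forall i j, (i < M)%N -> (j < size W)%N ->
      ea eta (size P0 + i * size W + j) = nth (null_reaction S) W j].
Proof.
move=> Hgrow Happ c01 v0 e0 vW eW.
have pass i : (i < M)%N -> P0 ++ flatten (nseq M W) =
    (P0 ++ flatten (nseq i W)) ++ W ++ flatten (nseq (M - i.+1) W).
  move=> lt; have {1}-> : M = (i + (M - i.+1).+1)%N by rewrite addnS -addSn subnKC.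
  by rewrite nseqD flatten_cat catA.
have vL : valid_path Rs c0 (P0 ++ flatten (nseq M W)).
  by rewrite valid_path_cat e0; split=> //; case: (valid_path_nseq M vW eW).
have [eta [E fair Hc Ha]] := fair_extension Hgrow Happ c01 vL.
have start i : path_end c0 (P0 ++ flatten (nseq i W)) = f.
  by rewrite path_end_cat e0; case: (valid_path_nseq i vW eW).
have size_pre i : size (P0 ++ flatten (nseq i W)) = (size P0 + i * size W)%N.
  by rewrite size_cat size_flatten /shape map_nseq sumn_nseq mulnC.
exists eta; split=> // i j lt lej.
  rewrite Hc; last first.
    by rewrite (pass i lt) size_cat size_pre size_cat leq_add2l (leq_trans lej) ?leq_addr.
  by rewrite (pass i lt) cfg_at_catr size_pre ?leq_addr // addKn start cfg_at_catl.
rewrite Ha; last by rewrite (pass i lt) size_cat size_pre size_cat ltn_add2l ltn_addr.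
by rewrite (pass i lt) nth_cat size_pre ltnNge leq_addr /= addKn nth_cat lej.
Qed.

(* Rounds starting during the [M] passes through a loop of length [L] that
   begins at time [p] are delayed to the start of the next pass. *)
Definition loop_skip (p L M t : nat) : nat :=
  if (t <= p)%N then p
  else if (t <= p + M * L)%N then (p + L * ((t - p + L.-1) %/ L))%N else t.

Lemma loop_skip_ge p L M : (0 < L)%N -> skipping_policy (loop_skip p L M).
Proof.
move=> L0 t; rewrite /loop_skip; case: ifP => [->|_] //; case: ifP => // _.
have := divn_eq (t - p + L.-1) L; have := ltn_pmod (t - p + L.-1) L0.
by rewrite (mulnC L); lia.
Qed.

Lemma loop_skip_pass p L M i t : (0 < L)%N -> (i < M)%N ->
  (p + i * L < t <= p + i.+1 * L)%N -> loop_skip p L M t = (p + i.+1 * L)%N.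
Proof.
move=> L0 iM /andP [lo hi]; have iLM : (i.+1 * L <= M * L)%N by rewrite leq_mul2r iM orbT.
rewrite /loop_skip ifN -?ltnNge ?(leq_ltn_trans (leq_addr _ _) lo) //.
rewrite ifT; last by apply: leq_trans hi _; rewrite leq_add2l.
have -> : (t - p + L.-1 = i.+1 * L + (t - p - i * L - 1))%N.
  by move: lo hi L0; rewrite mulSn; lia.
by rewrite divnMDl // divn_small ?addn0 1?mulnC //; move: lo hi; rewrite mulSn; lia.
Qed.

(* Under this condition a round that starts at the beginning of a pass through
   [W] ends within that pass. *)
Definition walk_ends_round (S : finType) (Q : seq (reaction S)) (f : cfg S)
  (W : seq (reaction S)) : bool :=
  has (fun j => nth (null_reaction S) W j \in Q) (iota 0 (size W)) ||
  all (fun q => has (fun j => ~~ applicable q (cfg_at f W j)) (iota 0 (size W))) Q.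

Section LoopRounds.
Variables (S U : finType) (Rs : seq (reaction S)) (mu : S -> U).
Variables (Crel : {ffun U -> nat} -> {ffun U -> nat} -> Prop) (x : mode).
Variables (c0 f : cfg S) (W : seq (reaction S)) (p M : nat) (eta : execution S).
Hypothesis Hcorr : correct Rs mu Crel x.
Hypothesis Hval : valid mu Crel c0.
Hypothesis Hexec : is_execution Rs eta c0.
Hypothesis Hfair : weakly_fair Rs eta.
Hypothesis HWe : path_end f W = f.
Hypothesis HL : (0 < size W)%N.
Hypothesis HM : (0 < M)%N.
Hypothesis Hec : forall i j, (i < M)%N -> (j <= size W)%N ->
  ec eta (p + i * size W + j) = cfg_at f W j.
Hypothesis Hea : forall i j, (i < M)%N -> (j < size W)%N ->
  ea eta (p + i * size W + j) = nth (null_reaction S) W j.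
Hypothesis Hng : ~ goal Rs x (ZI mu Crel c0) f.

Local Notation L := (size W).
Local Notation sigma := (loop_skip p L M).

Let skip_ge : skipping_policy sigma := loop_skip_ge p M HL.

Lemma ec_loop_start i : (i <= M)%N -> ec eta (p + i * L) = f.
Proof.
rewrite leq_eqVlt => /orP [/eqP ->|lt]; last by rewrite -[(p + i * L)%N]addn0 Hec ?cfg_at0.
by rewrite -(prednK HM) mulSnr addnA Hec ?prednK // cfg_at_size.
Qed.

Lemma tstar_after_loop : (p + M * L < tstar Rs mu Crel x c0 eta)%N.
Proof. by have [_ ->] := tstar_spec Hcorr Hval Hexec Hfair; rewrite ?ec_loop_start. Qed.

Variable rho : cfg S -> seq (reaction S).
Hypothesis Hrho : runtime_policy Rs rho.

Local Notation tr := (tround rho sigma eta).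
Local Notation ist := (istar Rs mu Crel x c0 rho sigma eta).

Lemma eround0_loop : eround rho sigma eta 0 = f.
Proof. by rewrite /eround /= /loop_skip leq0n -[p]addn0 -(mul0n L) ec_loop_start. Qed.

Lemma istar_gt0 : (0 < ist)%N.
Proof.
have [+ _] := istar_spec mu Crel x Hfair skip_ge Hrho c0; rewrite lt0n.
by apply: contraTneq => ->; rewrite -ltnNge (leq_ltn_trans _ tstar_after_loop).
Qed.

Lemma tau_loop_pass i : (i < M)%N -> walk_ends_round (rho f) f W ->
  (p + i * L < tau eta (p + i * L) (rho f) <= p + i.+1 * L)%N.
Proof.
move=> iM ends.
have [lt _ min] := tauP (p + i * L) Hfair (runtime_policy_sub Hrho (c := f)).
rewrite lt /=; apply: leq_trans (_ : p + i * L + L <= _)%N; last by rewrite mulSnr addnA.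
case/orP: ends => [/hasP [j] | /allP ends].
  rewrite mem_iota add0n => /andP [_ jL] jQ.
  apply: leq_trans (min (p + i * L + j.+1)%N _) _; last by rewrite leq_add2l.
  by rewrite /tau_pred addnS ltnS leq_addr /= Hea // jQ.
apply: min; rewrite /tau_pred -[X in (X < _)%N]addn0 ltn_add2l HL /=.
apply/orP; right; apply/allP => q /ends /hasP [j].
rewrite mem_iota add0n => /andP [_ jL] nq.
apply/hasP; exists (p + i * L + j)%N; last by rewrite Hec // ltnW.
by rewrite mem_index_iota leq_addr ltnS leq_add2l ltnW.
Qed.

Lemma loop_skip_round i : walk_ends_round (rho f) f W -> (i <= M)%N ->
  sigma (tr i) = (p + i * L)%N.
Proof.
move=> ends; elim: i => [_|i IH iM]; first by rewrite /= /loop_skip leq0n mul0n addn0.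
rewrite /= (IH (ltnW iM)) ec_loop_start ?(ltnW iM) //.
exact: loop_skip_pass HL iM (tau_loop_pass iM ends).
Qed.

Lemma loop_rounds : walk_ends_round (rho f) f W ->
  (M < ist)%N /\ forall i, (i < M)%N -> eround rho sigma eta i = f.
Proof.
move=> ends; split=> [|i iM]; last first.
  by rewrite /eround loop_skip_round ?(ltnW iM) // ec_loop_start ?(ltnW iM).
have [le_ts _] := istar_spec mu Crel x Hfair skip_ge Hrho c0; rewrite ltnNge.
apply/negP => istM; have := leq_trans le_ts (skip_ge (tr ist)).
rewrite loop_skip_round // leqNgt => /negP; apply; apply: leq_ltn_trans tstar_after_loop.
by rewrite leq_add2l leq_mul2r istM orbT.
Qed.

Lemma RT_loop_ge (RR : realType) (phi : RR) : walk_ends_round (rho f) f W ->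
  ((M%:R / ptotal Rs phi f)%:E <= RT Rs mu Crel x phi rho sigma c0 eta)%E.
Proof.
case/loop_rounds => /ltnW Mist ef.
apply: le_trans _ (RT_ge_sum (mu := mu) (Crel := Crel) (x := x) phi Mist).
rewrite (eq_bigr (fun=> TC Rs phi rho f)) => [|i _]; last by rewrite ef.
have : (\sum_(i < M) ((ptotal Rs phi f)^-1)%:E <= \sum_(i < M) TC Rs phi rho f)%E.
  by apply: lee_sum => i _; apply: TC_ge_inv_ptotal.
apply: le_trans.
by rewrite sumEFin lee_fin sumr_const card_ord mulr_natl.
Qed.

Lemma RT_ge_TC_start (RR : realType) (phi : RR) :
  (TC Rs phi rho f <= RT Rs mu Crel x phi rho sigma c0 eta)%E.
Proof.
have := RT_ge_sum (mu := mu) (Crel := Crel) (x := x) phi istar_gt0.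
by rewrite big_ord1 eround0_loop.
Qed.

End LoopRounds.

Section SpeedFault.
Variables (S : finType) (Rs : seq (reaction S)) (RR : realType) (phi s : RR).
Implicit Types (c : cfg S) (a : reaction S).
Hypothesis Hphi : 0 < phi.
Hypothesis Hs : 0 < s.

Lemma fast_ptotal_gt0 c a : a \in Rs -> fast Rs phi s c a -> 0 < ptotal Rs phi c.
Proof.
move=> aR /andP [_ fa]; apply: lt_le_trans (propensity_le_ptotal (ltW Hphi) c aR).
by apply: le_lt_trans fa; rewrite divr_ge0 ?ltW.
Qed.

Lemma exists_fast_reaction c :
  (forall r : cfg S, (1 <= norm1 r <= 2)%N -> Rof Rs r != [::]) ->
  (size Rs)%:R * s < phi -> (1 <= norm1 c)%N -> exists2 a, a \in Rs & fast Rs phi s c a.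
Proof.
move=> Rof_ne slow c1; have [a aR [app a1]] := unimolecular_applicable Rof_ne c1.
exists a; rewrite // /fast app /=; apply: lt_le_trans (propensity_unimolecular _ aR app a1).
have Rs0 : 0 < (size Rs)%:R :> RR by rewrite ltr0n; case: (Rs) aR.
by rewrite ltr_pdivrMr // -ltr_pdivrMl ?invr_gt0 // invrK.
Qed.

Lemma TC_fast_complete_ge rho f W :
  valid_path Rs f W -> path_end f W = f -> (0 < size W)%N ->
  fast_complete Rs phi s f W ->
  (forall j, (j < size W)%N -> 0 < ptotal Rs phi (cfg_at f W j)) ->
  ~~ walk_ends_round (rho f) f W ->
  ((phi / (2 * (size Rs)%:R * s))%:E <= TC Rs phi rho f)%E.
Proof.
move=> vW eW W0 fc ptot_gt0; rewrite negb_or => /andP [noQ /allPn [q qQ /hasPn qapp]].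
pose B c := exists2 j, (j < size W)%N & c = cfg_at f W j.
pose Pi := \sum_(j < size W) ptotal Rs phi (cfg_at f W j).
have Rs0 : (0 < size Rs)%N.
  by move: (ptot_gt0 0%N W0); rewrite /ptotal; case: (Rs); rewrite // big_nil ltxx.
apply: (@TC_trap_ge _ _ _ phi s Pi (rho f) q B) => //.
- by move=> _ [j lt ->]; apply: ptot_gt0.
- move=> _ [j lt ->]; rewrite /Pi (bigD1 (Ordinal lt)) //= lerDl.
  by apply: sumr_ge0 => i _; apply: ptotal_ge0 (ltW Hphi) _.
- move=> _ a [j lt ->] aR hp.
  have fa : fast Rs phi s (cfg_at f W j) a.
    by rewrite /fast hp (propensity_gt0_applicable (le_lt_trans _ hp)) ?divr_ge0 ?ltW.
  have [j' lt' [<- <-]] := fc j a lt aR fa.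
  have [_ _ <-] := cfg_atS (null_reaction S) vW lt'; split.
    move: lt'; rewrite leq_eqVlt => /orP [/eqP eq|lt'']; last by exists j'.+1.
    by exists 0%N; rewrite // cfg_at0 cfg_at_size -?eq.
  by apply: contra noQ => jQ; apply/hasP; exists j'; rewrite ?mem_iota.
- by move=> _ [j lt ->]; apply/negPn/qapp; rewrite mem_iota.
- by exists 0%N; rewrite ?cfg_at0.
Qed.

End SpeedFault.

Lemma pitfall_runtime_ge (S U : finType) (Rs : seq (reaction S)) (mu : S -> U)
  (Crel : {ffun U -> nat} -> {ffun U -> nat} -> Prop) (x : mode)
  (RR : realType) (phi s : RR) (c0 c : cfg S) (K : nat) :
  wf_crn Rs -> correct Rs mu Crel x -> valid mu Crel c0 ->
  (forall c', reach Rs c0 c' -> (norm1 c' <= K)%N) ->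
  0 < s -> (size Rs)%:R * s < phi -> pitfall Rs mu Crel x phi s c0 c ->
  exists eta sigma, [/\ is_execution Rs eta c0, weakly_fair Rs eta,
    skipping_policy sigma &
    forall rho, runtime_policy Rs rho ->
      ((phi / (2 * (size Rs)%:R * s))%:E <= RT Rs mu Crel x phi rho sigma c0 eta)%E].
Proof.
move=> [_ _ Hgrow Rof_ne _] corr val bound s0 slow [c0c pit].
have c01 : (1 <= norm1 c0)%N by case: val.
have phi0 : 0 < phi by apply: le_lt_trans slow; rewrite mulr_ge0 // ltW.
have fast_reach c' : reach Rs c0 c' -> exists2 a, a \in Rs & fast Rs phi s c' a.
  move=> r; apply: (exists_fast_reaction phi0 Rof_ne slow).
  exact: leq_trans c01 (reach_norm1 Hgrow r).
have Happ c' : (1 <= norm1 c')%N -> has (fun a => applicable a c') Rs.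
  by case/(unimolecular_applicable Rof_ne) => a aR [app _]; apply/hasP; exists a.
have [f [ps [W [[vps eps] nslow [vW eW] W0 fc]]]] :=
  fast_trap_walk (fun c' r => bound c' (reach_trans c0c r))
                 (fun c' r => fast_reach c' (reach_trans c0c r)).
have [ps0 v0 e0] := path_of_reach c0c.
have vP : valid_path Rs c0 (ps0 ++ ps) by rewrite valid_path_cat e0.
have eP : path_end c0 (ps0 ++ ps) = f by rewrite path_end_cat e0.
have ng : ~ goal Rs x (ZI mu Crel c0) f by rewrite -eps => /(pit _ vps).
have ptot_gt0 j : (j < size W)%N -> 0 < ptotal Rs phi (cfg_at f W j).
  move=> _; have [|a aR] := fast_reach (cfg_at f W j); last exact: fast_ptotal_gt0.
  by rewrite -eP; apply: reach_trans (reach_path vP) _; rewrite eP; apply: reach_cfg_at.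
have pf0 : 0 < ptotal Rs phi f by rewrite -(cfg_at0 f W); apply: ptot_gt0.
have kappa0 : 0 <= phi / (2 * (size Rs)%:R * s) by rewrite divr_ge0 ?mulr_ge0 ?ler0n ?ltW.
pose M := (Num.Def.archi_bound (phi / (2 * (size Rs)%:R * s) * ptotal Rs phi f)).+1.
have [eta [E fair Hec Hea]] := loop_execution M Hgrow Happ c01 vP eP vW eW.
exists eta, (loop_skip (size (ps0 ++ ps)) (size W) M); split=> //.
  exact: loop_skip_ge.
move=> rho Hrho; case ends: (walk_ends_round (rho f) f W).
  apply: le_trans (RT_loop_ge corr val E fair eW W0 _ Hec Hea ng Hrho phi ends) => //.
  rewrite lee_fin ler_pdivlMr //; apply/ltW/(lt_le_trans (archi_boundP _)).
    by rewrite mulr_ge0 // ltW.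
  by rewrite ler_nat.
apply: le_trans (RT_ge_TC_start corr val E fair eW W0 _ Hec ng Hrho phi) => //.
by apply: (TC_fast_complete_ge phi0 s0 vW eW W0 fc ptot_gt0); rewrite ends.
Qed.

Theorem lemma4p4 (RR : realType) (S U : finType) (Rs : seq (reaction S))
  (mu : S -> U) (Crel : {ffun U -> nat} -> {ffun U -> nat} -> Prop)
  (x : mode) (vol : nat -> RR) (C0 : set (cfg S)) :
  wf_crn Rs -> finite_density Rs mu Crel -> volume_linear vol ->
  correct Rs mu Crel x ->
  (forall c0, C0 c0 -> valid mu Crel c0) -> ~ finite_set C0 ->
  speed_fault Rs mu Crel x vol C0 ->
  exists2 kappa : RR, 0 < kappa &
    forall n0 : nat, (0 < n0)%N ->
      exists c0 : cfg S, [/\ C0 c0, (n0 <= norm1 c0)%N &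
        exists (eta : execution S) (sigma : nat -> nat),
          [/\ is_execution Rs eta c0, weakly_fair Rs eta, skipping_policy sigma &
              forall rho : cfg S -> seq (reaction S), runtime_policy Rs rho ->
                ((kappa * (norm1 c0)%:R)%:E <=
                   RT Rs mu Crel x (vol (norm1 c0)) rho sigma c0 eta)%E]].
Proof.
move=> wf [D HD] [a [b [a0 _ Hab]]] corr C0v _ [s s0 sf].
have Rs0 : 0 < (size Rs)%:R :> RR.
  have [c1 [/C0v [c11 _] _ _]] := sf 1%N isT; case: wf => _ _ _ Rof_ne _.
  by have [r rR _] := unimolecular_applicable Rof_ne c11; rewrite ltr0n; case: (Rs) rR.
set k : RR := (size Rs)%:R.
have ks0 : 0 < k * s by rewrite mulr_gt0.
exists (a / (2 * k * s)); first by rewrite divr_gt0 ?mulr_gt0.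
move=> n0 n0_gt0; pose N1 := Num.Def.archi_bound (k * s / a).
have [c0 [C0c0 le_n [c pit]]] := sf (maxn n0 N1) (leq_trans n0_gt0 (leq_maxl _ _)).
exists c0; split=> //; first exact: leq_trans (leq_maxl _ _) le_n.
have val := C0v c0 C0c0; have [vol_ge _] := Hab _ (proj1 val).
have slow : k * s < vol (norm1 c0).
  apply: lt_le_trans vol_ge; rewrite -ltr_pdivrMl // mulrC.
  apply: lt_le_trans (archi_boundP _) _; first by rewrite divr_ge0 ?ltW.
  by rewrite ler_nat (leq_trans (leq_maxr _ _) le_n).
have [eta [sigma [E fair skip Hrt]]] :=
  pitfall_runtime_ge wf corr val (fun c1 => HD c0 c1 val) s0 slow pit.
exists eta, sigma; split=> // rho Hrho; apply: le_trans (Hrt rho Hrho).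
by rewrite lee_fin mulrAC ler_pM2r ?invr_gt0 ?mulr_gt0.
Qed.
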